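(* In the negative-fill variable-processor cup game against a greedy emptier, suppose that at the beginning of some round all fills are (possibly negative) half-integers (integer multiples of $1/2$). Let $k\in\mathbb Z$ and $q\in\mathbb N$, $q\ge1$, and suppose at least $2q$ cups have fill exactly $k/2$. Then the filler can ensure that at the end of the round exactly $q$ of the cups of fill $k/2$ have fill $(k+1)/2$, exactly $q$ of the cups of fill $k/2$ have fill $(k-1)/2$, and all other cups are unchanged.
   Context: Negative-fill variable-processor cup game on $n$ cups: real fills; each round the filler chooses an integer $1\le p\le n$ and reals $a_i\in[0,1]$ with $\sum a_i=p$ and adds $a_i$ to cup $i$; then the emptier chooses $p$ distinct cups and subtracts exactly $1$ from each. The greedy emptier subtracts from the $p$ fullest cups after the filler's move (ties broken arbitrarily). *)

From mathcomp Require Import all_boot all_order all_algebra.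
Set Implicit Arguments. Unset Strict Implicit. Unset Printing Implicit Defensive.
Import Order.TTheory GRing.Theory Num.Theory.
Local Open Scope ring_scope.

Definition half_integer (R : realFieldType) (x : R) : Prop :=
  exists z : int, x = z%:~R / 2.

Definition filler_move (R : realFieldType) (n : nat) (p : nat) (a : 'I_n -> R) : Prop :=
  [/\ (1 <= p <= n)%N, (forall i, 0 <= a i <= 1) & \sum_(i < n) a i = p%:R].

(* S is a possible choice of the greedy emptier on the fills g (after the
   filler's move): S consists of p distinct cups which are p fullest ones
   (ties broken arbitrarily, i.e. any such S is allowed). *)
Definition greedy_choice (R : realFieldType) (n : nat) (g : 'I_n -> R) (p : nat)
  (S : {set 'I_n}) : Prop :=
  #|S| = p /\ (forall i j, i \in S -> j \notin S -> g j <= g i).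

Definition round_result (R : realFieldType) (n : nat) (f a : 'I_n -> R)
  (S : {set 'I_n}) : 'I_n -> R :=
  fun i => f i + a i - (if i \in S then 1 else 0).

(* Give each cup strictly above k/2 a full unit, 1/2 to each of 2q chosen cups
   at k/2, and nothing to the others, with p = #|above| + q processors.  By
   half-integrality the cups above k/2 end at least 3/2 above it, the chosen
   cups sit at k/2 + 1/2 and all others stay at most at k/2.  These three levels
   are strictly separated, so any greedy emptier takes all the cups above k/2
   (which return to their fill) plus exactly q of the chosen cups (which drop to
   (k-1)/2), while the other q chosen cups keep (k+1)/2. *)

From mathcomp Require Import all_boot all_order all_algebra.
From mathcomp Require Import lra.
Set Implicit Arguments. Unset Strict Implicit. Unset Printing Implicit Defensive.
Import Order.TTheory GRing.Theory Num.Theory.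
Local Open Scope ring_scope.

Section GreedyChoice.
Variables (R : realFieldType) (T : finType) (g : T -> R).

Definition strict_upper (U : {set T}) :=
  forall i j, i \in U -> j \notin U -> g j < g i.

Variable S : {set T}.
Hypothesis greedyS : forall i j, i \in S -> j \notin S -> g j <= g i.

Lemma strict_upper_greedy_comparable U :
  strict_upper U -> S \subset U \/ U \subset S.
Proof.
move=> upU; case: (boolP (S \subset U)) => [|/subsetPn[j jS jU]]; first by left.
right; apply/subsetP=> i iU; apply/negPn/negP=> iS.
by have := upU i j iU jU; rewrite ltNge greedyS.
Qed.

Lemma strict_upper_sub_greedy U :
  strict_upper U -> (#|U| <= #|S|)%N -> U \subset S.
Proof.
move=> /strict_upper_greedy_comparable[] // sSU leUS.
by rewrite -(subset_leqif_card sSU) eqn_leq leUS subset_leq_card.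
Qed.

Lemma greedy_sub_strict_upper U :
  strict_upper U -> (#|S| <= #|U|)%N -> S \subset U.
Proof.
move=> /strict_upper_greedy_comparable[] // sUS leSU.
by rewrite -(subset_leqif_card sUS) eqn_leq leSU subset_leq_card.
Qed.

End GreedyChoice.

Lemma half_integer_lt_le (R : realFieldType) (x y : R) :
  half_integer x -> half_integer y -> y < x -> y + 1 / 2 <= x.
Proof.
move=> [z ->] [w ->]; rewrite ltr_pM2r ?invr_gt0 ?ltr0n // ltr_int -lezD1.
by rewrite -(ler_int R) intrD; lra.
Qed.

Section HalfMove.
Variables (R : realFieldType) (n : nat) (H X : {set 'I_n}).
Hypothesis HX_disjoint : [disjoint H & X].

Definition half_move (i : 'I_n) : R :=
  if i \in H then 1 else if i \in X then 1 / 2 else 0.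

Lemma sum_half_move : \sum_i half_move i = #|H|%:R + #|X|%:R / 2.
Proof.
rewrite (eq_bigr (fun i => (if i \in H then 1 else 0) +
                           (if i \in X then 1 / 2 else 0))); last first.
  move=> i _; rewrite /half_move.
  case: ifP => iH; case: ifP => iX; rewrite ?addr0 ?add0r //.
  by rewrite (disjointFl HX_disjoint iX) in iH.
rewrite big_split /= -!big_mkcond /= !sumr_const -mulr_natr; lra.
Qed.

Lemma filler_move_half_move q :
  (1 <= q)%N -> #|X| = (2 * q)%N -> filler_move (#|H| + q) half_move.
Proof.
move=> q_gt0 cardX; split.
- rewrite addn_gt0 q_gt0 orbT -[n in (_ <= n)%N]card_ord /=.
  apply: leq_trans (max_card (H :|: X)).
  rewrite cardsU (disjoint_setI0 HX_disjoint) cards0 subn0 cardX leq_add2l.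
  by rewrite mul2n -addnn leq_addl.
- move=> i; rewrite /half_move; case: ifP => _; first by rewrite ler01 lexx.
  by case: ifP => _; [apply/andP; split; lra | rewrite lexx ler01].
- by rewrite sum_half_move cardX natrD natrM; lra.
Qed.

End HalfMove.

Arguments half_move {R n} H X i.

Section GreedyResponse.
Variables (R : realFieldType) (n : nat) (f : 'I_n -> R) (K : R).
Variables (X : {set 'I_n}) (q : nat).
Hypothesis f_half : forall i, half_integer (f i).
Hypothesis K_half : half_integer K.
Hypothesis fX : forall i, i \in X -> f i = K.
Hypothesis cardX : #|X| = (2 * q)%N.

Let H := [set i | K < f i].
Let g i := f i + half_move H X i.

Lemma above_disjoint : [disjoint H & X].
Proof.
rewrite -setI_eq0; apply/eqP/setP=> i; rewrite !inE.
by apply/negbTE/andP=> -[ltKf /fX fK]; rewrite fK ltxx in ltKf.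
Qed.

Lemma fill_above i : i \in H -> g i = f i + 1.
Proof. by rewrite /g /half_move => ->. Qed.

Lemma fill_chosen i : i \in X -> g i = K + 1 / 2.
Proof.
move=> iX; have iH := disjointFl above_disjoint iX.
by rewrite /g /half_move iH iX fX.
Qed.

Lemma fill_rest i : i \notin H :|: X -> g i = f i.
Proof.
rewrite /g /half_move inE negb_or => /andP[/negbTE-> /negbTE->].
by rewrite addr0.
Qed.

Lemma above_ge i : i \in H -> K + 1 / 2 <= f i.
Proof. by rewrite inE; apply: half_integer_lt_le. Qed.

Lemma below_le i : i \notin H -> f i <= K.
Proof. by rewrite inE -leNgt. Qed.

Lemma strict_upper_above : strict_upper g H.
Proof.
move=> i j iH jH; rewrite (fill_above iH); have := above_ge iH.
case: (boolP (j \in X)) => jX; first by rewrite fill_chosen //; lra.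
have jHX : j \notin H :|: X by rewrite inE negb_or jH.
by rewrite (fill_rest jHX); have := below_le jH; lra.
Qed.

Lemma strict_upper_above_chosen : strict_upper g (H :|: X).
Proof.
move=> i j iHX jHX; rewrite (fill_rest jHX).
move: jHX; rewrite inE negb_or => /andP[/below_le fjK _].
case/setUP: iHX => [iH | iX]; last by rewrite (fill_chosen iX); lra.
by rewrite (fill_above iH); have := above_ge iH; lra.
Qed.

Variable S : {set 'I_n}.
Hypothesis cardS : #|S| = (#|H| + q)%N.
Hypothesis greedyS : forall i j, i \in S -> j \notin S -> g j <= g i.

Lemma above_sub_greedy : H \subset S.
Proof.
apply: strict_upper_sub_greedy greedyS _ strict_upper_above _.
by rewrite cardS leq_addr.
Qed.

Lemma greedy_sub_above_chosen : S \subset H :|: X.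
Proof.
apply: greedy_sub_strict_upper greedyS _ strict_upper_above_chosen _.
rewrite cardS cardsU (disjoint_setI0 above_disjoint) cards0 subn0 cardX.
by rewrite leq_add2l leq_pmull.
Qed.

Lemma card_chosen_greedy : #|X :&: S| = q.
Proof.
have SX : S :\: X = H.
  apply/eqP; rewrite eqEsubset subDset setUC greedy_sub_above_chosen /=.
  by rewrite subsetD above_sub_greedy above_disjoint.
by apply/eqP; rewrite -(eqn_add2l #|H|) -cardS -{1}SX addnC setIC cardsID.
Qed.

Lemma card_chosen_spared : #|X :\: S| = q.
Proof.
apply/eqP; rewrite -(eqn_add2l q) -{1}card_chosen_greedy cardsID cardX.
by rewrite mul2n addnn.
Qed.

Lemma round_result_half_move i :
  round_result f (half_move H X) S i =
  if i \in X then (if i \in S then K - 1 / 2 else K + 1 / 2) else f i.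
Proof.
rewrite /round_result -/(g i); case: (boolP (i \in X)) => iX.
  by rewrite fill_chosen //; case: (i \in S); lra.
case: (boolP (i \in H)) => iH.
  by rewrite (fill_above iH) (subsetP above_sub_greedy _ iH); lra.
have iHX : i \notin H :|: X by rewrite inE negb_or iH.
have iS : i \notin S.
  by apply: contra iHX; apply/subsetP/greedy_sub_above_chosen.
by rewrite (fill_rest iHX) (negbTE iS) subr0.
Qed.

End GreedyResponse.

Theorem lemma5p3 (R : realFieldType) (n : nat) (f : 'I_n -> R) (k : int) (q : nat) :
  (forall i, half_integer (f i)) ->
  (1 <= q)%N ->
  (2 * q <= #|[set i | f i == k%:~R / 2]|)%N ->
  exists (p : nat) (a : 'I_n -> R),
    filler_move p a /\
    forall S : {set 'I_n}, greedy_choice (fun i => f i + a i) p S ->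
      exists A B : {set 'I_n},
        [/\ [disjoint A & B], #|A| = q, #|B| = q,
            (forall i, i \in A :|: B -> f i = k%:~R / 2) &
            (forall i, round_result f a S i =
               if i \in A then (k + 1)%:~R / 2
               else if i \in B then (k - 1)%:~R / 2
               else f i)].
Proof.
move=> f_half q_gt0 card_level; set K : R := k%:~R / 2.
have /card_gt0P[X]:
    (0 < #|[set X : {set 'I_n} | X \subset [set i | f i == K] & #|X| == 2 * q]|)%N.
  by rewrite cards_draws bin_gt0.
rewrite inE => /andP[/subsetP levelX /eqP cardX].
have fX i : i \in X -> f i = K by move/levelX; rewrite inE => /eqP.
have K_half : half_integer K by exists k.
set H := [set i | K < f i].
exists (#|H| + q)%N, (half_move H X); split.
  by apply: filler_move_half_move q_gt0 cardX; apply: above_disjoint fX.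
move=> S [cardS greedyS].
exists (X :\: S), (X :&: S); split.
- by rewrite -setI_eq0 setIC setDE setIACA setIid setICr setI0.
- exact: card_chosen_spared greedyS.
- exact: card_chosen_greedy greedyS.
- by move=> i /setUP[/setDP[iX _] | /setIP[iX _]]; apply: fX.
move=> i; rewrite (round_result_half_move f_half K_half fX cardX cardS greedyS).
rewrite !inE; case: (i \in X); case: (i \in S) => //=.
all: rewrite /K ?intrD ?intrB; lra.
Qed.
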